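(* Let $Q$ be a commutative Noetherian local ring, $x\in Q$ a $Q$-regular element and $R=Q/(x)$. Let $X$ be an $R$-complex with $H_i(X)=0$ for $|i|\gg0$. Then there exist a $Q$-projective resolution $W$ of $X$ (viewing $X$ as a $Q$-complex) and an $R$-projective resolution $F$ of $X$ together with an exact sequence of $R$-complexes $$0\to R\otimes_Q W\to F\to \Sigma^2 F\to 0$$ which is degreewise split.
   Context: For an integer $n$, $\Sigma^n X$ denotes the shifted complex with $(\Sigma^nX)_\ell=X_{\ell-n}$ and differential $(-1)^n\partial^X_{\ell-n}$. A projective resolution of a complex $X$ is a complex of projective modules (bounded below) together with a quasi-isomorphism to $X$. A sequence of complexes is degreewise split if it is split exact in each degree as a sequence of modules. *)

From HB Require Import structures.
From mathcomp Require Import all_boot all_order all_algebra.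
Set Implicit Arguments. Unset Strict Implicit. Unset Printing Implicit Defensive.
Import Order.TTheory GRing.Theory Num.Theory.
Local Open Scope ring_scope.

Definition ideal (Q : comNzRingType) (I : Q -> Prop) : Prop :=
  [/\ I 0, (forall a b, I a -> I b -> I (a + b)) & (forall r a, I a -> I (r * a))].

Definition finitely_generated (Q : comNzRingType) (I : Q -> Prop) : Prop :=
  exists s : seq Q, forall a, I a <->
    exists c : 'I_(size s) -> Q, a = \sum_(k < size s) c k * s`_k.

Definition noetherian (Q : comNzRingType) : Prop :=
  forall I : Q -> Prop, ideal I -> finitely_generated I.

Definition maximal_ideal (Q : comNzRingType) (m : Q -> Prop) : Prop :=
  [/\ ideal m, ~ m 1 &
      forall J : Q -> Prop, ideal J -> (forall a, m a -> J a) ->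
        J 1 \/ (forall a, J a -> m a)].

Definition local_ring (Q : comNzRingType) : Prop :=
  exists m : Q -> Prop, maximal_ideal m /\
    forall m', maximal_ideal m' -> forall a, m' a <-> m a.

(* x is Q-regular: a non-zero-divisor on Q with Q/xQ <> 0. *)
Definition regular_element (Q : comNzRingType) (x : Q) : Prop :=
  (forall q : Q, x * q = 0 -> q = 0) /\ ~ (exists q : Q, x * q = 1).

Definition is_quotient_by (Q R : comNzRingType) (x : Q) (pi : {rmorphism Q -> R}) : Prop :=
  (forall r : R, exists q : Q, pi q = r) /\
  (forall q : Q, pi q = 0 <-> exists a : Q, q = x * a).

Definition lin (A : comNzRingType) (U V : lmodType A) (f : U -> V) : Prop :=
  forall a u v, f (a *: u + v) = a *: f u + f v.

(* pi-semilinear maps: Q-linear maps from a Q-module to an R-module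
   viewed as a Q-module by restriction of scalars along pi. *)
Definition slin (Q R : comNzRingType) (pi : {rmorphism Q -> R})
  (U : lmodType Q) (V : lmodType R) (f : U -> V) : Prop :=
  forall a u v, f (a *: u + v) = pi a *: f u + f v.

Definition projective (A : comNzRingType) (P : lmodType A) : Prop :=
  forall (M N : lmodType A) (g : M -> N) (f : P -> N),
    lin g -> lin f -> (forall n, exists m, g m = n) ->
    exists h : P -> M, lin h /\ forall p, g (h p) = f p.

(* T together with eta : M -> T is the base change R (x)_Q M, characterised
   by its universal property (extension of scalars along pi). *)
Definition base_change (Q R : comNzRingType) (pi : {rmorphism Q -> R})
  (M : lmodType Q) (T : lmodType R) (eta : M -> T) : Prop :=
  slin pi eta /\
  forall (N : lmodType R) (f : M -> N), slin pi f ->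
    exists g : T -> N, [/\ lin g, (forall m, g (eta m) = f m) &
      forall g' : T -> N, lin g' -> (forall m, g' (eta m) = f m) ->
        forall t, g' t = g t].

(* A complex indexed by int (homological grading); the differential is given
   as a family cdif i j : C_i -> C_j which is zero unless j = i - 1
   (so cdif i (i-1) is the differential d_i). *)
Unset Implicit Arguments.
Record complex (A : comNzRingType) := Complex {
  cobj :> int -> lmodType A;
  cdif : forall i j : int, cobj i -> cobj j;
  cdif_lin : forall i j, lin (cdif i j);
  cdif_deg : forall i j x, j != i - 1 -> cdif i j x = 0;
  cdif_sq : forall i j k x, cdif j k (cdif i j x) = 0 }.
Set Implicit Arguments.
Arguments cdif {A} c i j.
Arguments Complex {A}.
Arguments cdif_lin {A} c i j.
Arguments cdif_deg {A} c i j x.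
Arguments cdif_sq {A} c i j k x.
Arguments cobj {A} c i.

Lemma shift_lin (A : comNzRingType) (C : complex A) (n : int) (i j : int) :
  lin (fun x : C (i - n) => (-1) ^+ `|n|%N *: cdif C (i - n) (j - n) x).
Proof.
move=> a u v /=; rewrite (cdif_lin C (i - n) (j - n) a u v) scalerDr !scalerA.
by rewrite mulrC.
Qed.

Lemma shift_deg (A : comNzRingType) (C : complex A) (n : int) (i j : int)
  (x : C (i - n)) : j != i - 1 ->
  (-1) ^+ `|n|%N *: cdif C (i - n) (j - n) x = 0.
Proof.
move=> h; rewrite (cdif_deg C) ?scaler0 //; apply: contra h => /eqP e.
apply/eqP; apply: (addIr (- n)); rewrite e.
by rewrite -!addrA [(- 1) + _]addrC.
Qed.

Lemma shift_sq (A : comNzRingType) (C : complex A) (n : int) (i j k : int)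
  (x : C (i - n)) :
  (-1) ^+ `|n|%N *: cdif C (j - n) (k - n)
     ((-1) ^+ `|n|%N *: cdif C (i - n) (j - n) x) = 0.
Proof.
have h0 : cdif C (j - n) (k - n) 0 = 0.
  have e := cdif_lin C (j - n) (k - n) 1 0 0.
  rewrite scale1r scale1r addr0 in e.
  by apply: (addIr (cdif C (j - n) (k - n) 0)); rewrite add0r -e.
have h := cdif_lin C (j - n) (k - n) ((-1) ^+ `|n|%N) (cdif C (i - n) (j - n) x) 0.
by rewrite addr0 h0 addr0 in h; rewrite h (cdif_sq C) !scaler0.
Qed.

Definition shift (A : comNzRingType) (n : int) (C : complex A) : complex A :=
  @Complex A (fun i => C (i - n))
    (fun i j x => (-1) ^+ `|n|%N *: cdif C (i - n) (j - n) x)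
    (@shift_lin A C n) (@shift_deg A C n) (@shift_sq A C n).

Definition chain_map (A : comNzRingType) (C D : complex A)
  (f : forall i, C i -> D i) : Prop :=
  (forall i, lin (f i)) /\
  (forall i j x, f j (cdif C i j x) = cdif D i j (f i x)).

Definition schain_map (Q R : comNzRingType) (pi : {rmorphism Q -> R})
  (C : complex Q) (D : complex R) (f : forall i, C i -> D i) : Prop :=
  (forall i, slin pi (f i)) /\
  (forall i j x, f j (cdif C i j x) = cdif D i j (f i x)).

(* f induces an isomorphism on all homology groups H_j. *)
Definition quasi_iso (A B : comNzRingType) (C : complex A) (D : complex B)
  (f : forall i, C i -> D i) : Prop :=
  forall j : int,
    (forall y : D j, cdif D j (j - 1) y = 0 ->
       exists (x : C j) (z : D (j + 1)),
         cdif C j (j - 1) x = 0 /\ y = f j x + cdif D (j + 1) j z) /\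
    (forall x : C j, cdif C j (j - 1) x = 0 ->
       (exists z : D (j + 1), f j x = cdif D (j + 1) j z) ->
       exists w : C (j + 1), x = cdif C (j + 1) j w).

Definition homology_zero (A : comNzRingType) (C : complex A) (i : int) : Prop :=
  forall y : C i, cdif C i (i - 1) y = 0 ->
    exists z : C (i + 1), y = cdif C (i + 1) i z.

Definition bounded_below (A : comNzRingType) (C : complex A) : Prop :=
  exists n0 : int, forall i, i < n0 -> forall p : C i, p = 0.

Definition proj_complex (A : comNzRingType) (C : complex A) : Prop :=
  bounded_below C /\ forall i, projective (C i).

Definition degreewise_split_exact (A : comNzRingType) (C D E : complex A)
  (alpha : forall i, C i -> D i) (beta : forall i, D i -> E i) : Prop :=
  forall i, [/\ injective (alpha i),
    (forall y, beta i y = 0 <-> exists x, y = alpha i x) &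
    exists s : E i -> D i, lin s /\ forall z, beta i (s z) = z].

(* Shamash's construction. Build a free Q-resolution W -> X degree by degree
   together with maps sigma : W_n -> W_(n+1) such that sigma^2 = 0 and
   d sigma + sigma d = x: in degree n + 1 one adjoins a generator e for each
   cycle w of W_n whose augmentation bounds some y in X, with d e = w and
   aug e = y, and a copy sigma h of each generator h of degree n, with
   d (sigma h) = x h - sigma (d h).  As x = 0 in R, on T = R (x)_Q W the maps
   d and sigma anticommute, so F_n = T_n (+) T_(n-2) (+) T_(n-4) (+) ... with
   differential d + sigma is a free R-complex over X.  It is a resolution
   because x is regular on W: a cycle of F is lifted to W summand by summand,
   each obstruction being divisible by x.  The first summand T_n and the
   projection onto the others give 0 -> T -> F -> Sigma^2 F -> 0.  Only the
   vanishing of H_i(X) for i << 0 is used, to start W in a finite degree. *)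

From HB Require Import structures.
From mathcomp Require Import all_boot all_order all_algebra finmap zify.
From mathcomp Require Import boolp.
From mathcomp.multinomials Require Import monalg.
Set Implicit Arguments. Unset Strict Implicit. Unset Printing Implicit Defensive.
Import Order.TTheory GRing.Theory Num.Theory.
Local Open Scope ring_scope.

(** * Semilinear maps and free modules *)

Section Semilinear.
Variables (A B : comNzRingType) (phi : {rmorphism A -> B}).
Variables (U : lmodType A) (V : lmodType B) (f : U -> V).
Hypothesis f_slin : slin phi f.

Lemma slinD u v : f (u + v) = f u + f v.
Proof. by have := f_slin 1 u v; rewrite !scale1r rmorph1 scale1r. Qed.

Lemma slin0 : f 0 = 0.
Proof. by apply: (addIr (f 0)); rewrite -slinD !add0r. Qed.

Lemma slinZ a u : f (a *: u) = phi a *: f u.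
Proof. by have := f_slin a u 0; rewrite !addr0 slin0 addr0. Qed.

Lemma slinN u : f (- u) = - f u.
Proof. by rewrite -scaleN1r slinZ rmorphN1 scaleN1r. Qed.

Lemma slinB u v : f (u - v) = f u - f v.
Proof. by rewrite slinD slinN. Qed.

Lemma slin_sum (I : Type) (r : seq I) (F : I -> U) :
  f (\sum_(i <- r) F i) = \sum_(i <- r) f (F i).
Proof.
elim: r => [|i r IHr]; first by rewrite !big_nil slin0.
by rewrite !big_cons slinD IHr.
Qed.

End Semilinear.

Lemma slin_zero (A B : comNzRingType) (phi : {rmorphism A -> B})
    (U : lmodType A) (V : lmodType B) : slin phi (fun _ : U => 0 : V).
Proof. by move=> a u v; rewrite scaler0 addr0. Qed.

Lemma lin_slin (A : comNzRingType) (U V : lmodType A) (f : U -> V) :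
  lin f -> slin idfun f.
Proof. by []. Qed.

(* Free modules on an arbitrary type of generators, which get the classical
   equality and choice structures required by [malg]. *)
Definition free_mod (A : comNzRingType) (S : Type) : lmodType A :=
  {malg A[{classic S}]}.

Definition gen (A : comNzRingType) (S : Type) (s : S) : free_mod A S :=
  << (s : {classic S}) >>.
Arguments gen {A S} s.

Section FreeModule.
Variables (A B : comNzRingType) (phi : {rmorphism A -> B}).
Context {S : Type}.
Implicit Types (g : free_mod A S) (s : {classic S}).

Lemma freeE g : g = \sum_(s <- msupp g) g@_s *: << s >>.
Proof.
rewrite {1}(monalgE g); apply: eq_bigr => s _.
by apply/malgP => t; rewrite mcoeffZ !mcoeffU mulr_natr.
Qed.

Section Extension.
Variables (V : lmodType B) (f : S -> V).

Definition free_ext g : V := \sum_(s <- msupp g) phi g@_s *: f s.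

Lemma free_extEw (d : {fset {classic S}}) g : (msupp g `<=` d)%fset ->
  free_ext g = \sum_(s <- d) phi g@_s *: f s.
Proof.
move=> le_gd; apply: big_fset_incl => // s _ /mcoeff_outdom ->.
by rewrite rmorph0 scale0r.
Qed.

Lemma free_ext_slin : slin phi free_ext.
Proof.
move=> a g h; set d := (msupp g `|` msupp h)%fset.
have le_gd : (msupp g `<=` d)%fset by apply: fsubsetUl.
have le_hd : (msupp h `<=` d)%fset by apply: fsubsetUr.
have le_Zd : (msupp (a *: g + h) `<=` d)%fset.
  exact: fsubset_trans (msuppD_le _ _) (fsetSU _ (msuppZ_le _ _)).
rewrite !(free_extEw le_gd, free_extEw le_hd, free_extEw le_Zd).
rewrite scaler_sumr -big_split; apply: eq_bigr => s _ /=.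
by rewrite mcoeffD mcoeffZ rmorphD rmorphM scalerDl scalerA.
Qed.

Lemma free_ext_gen s : free_ext (gen s) = f s.
Proof.
by rewrite (free_extEw msuppU_le) big_seq_fset1 mcoeffUU rmorph1 scale1r.
Qed.

End Extension.

Lemma slin_free_eq (V : lmodType B) (g h : free_mod A S -> V) :
  slin phi g -> slin phi h -> (forall s, g (gen s) = h (gen s)) -> g =1 h.
Proof.
move=> g_slin h_slin eq_gh u; rewrite (freeE u) (slin_sum g_slin) (slin_sum h_slin).
by apply: eq_bigr => s _; rewrite (slinZ g_slin) (slinZ h_slin) eq_gh.
Qed.

Lemma free_mod_empty : (S -> False) -> forall g : free_mod A S, g = 0.
Proof. by move=> S0 g; rewrite (freeE g) big_seq big1 // => s; case: (S0 s). Qed.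

End FreeModule.

Lemma free_projective {A : comNzRingType} {S : Type} : projective (free_mod A S).
Proof.
move=> M N g f g_lin f_lin g_surj.
pose m (s : {classic S}) : M := projT1 (cid (g_surj (f (gen s)))).
have gm s : g (m s) = f (gen s) by rewrite /m; case: cid.
exists (free_ext idfun m); split; first exact: free_ext_slin.
apply: (@slin_free_eq A A idfun) => [||s]; last by rewrite /= free_ext_gen.
- move=> a u v /=; rewrite free_ext_slin; exact: g_lin.
- exact f_lin.
Qed.

Lemma projective_prod (A : comNzRingType) (U V : lmodType A) :
  projective U -> projective V -> projective (U * V)%type.
Proof.
move=> U_proj V_proj M N g f g_lin f_lin g_surj.
have fl_lin : lin (fun u : U => f (u, 0)).
  move=> a u v; rewrite -f_lin; congr f.
  by apply/pair_equal_spec; rewrite /= scaler0 addr0.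
have fr_lin : lin (fun v : V => f (0, v)).
  move=> a u v; rewrite -f_lin; congr f.
  by apply/pair_equal_spec; rewrite /= scaler0 addr0.
have [hl [hl_lin ghl]] := U_proj M N g _ g_lin fl_lin g_surj.
have [hr [hr_lin ghr]] := V_proj M N g _ g_lin fr_lin g_surj.
exists (fun p => hl p.1 + hr p.2); split.
  by move=> a u v /=; rewrite hl_lin hr_lin scalerDr addrACA.
case=> u v; rewrite (slinD (lin_slin g_lin)) ghl ghr -(slinD (lin_slin f_lin)).
by congr f; apply/pair_equal_spec; rewrite /= addr0 add0r.
Qed.

Section BaseChange.
Variables (Q R : comNzRingType) (pi : {rmorphism Q -> R}).
Context {S : Type}.
Implicit Types (w : free_mod Q S) (s : {classic S}).

Definition free_map : free_mod Q S -> free_mod R S := free_ext pi (fun s => << s >>).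

Lemma free_map_slin : slin pi free_map.
Proof. exact: free_ext_slin. Qed.

Lemma free_map_gen s : free_map (gen s) = gen s.
Proof. exact: free_ext_gen. Qed.

Lemma mcoeff_free_map w s : (free_map w)@_s = pi w@_s.
Proof.
have coeffU t : (pi w@_t *: << t >>)@_s = pi w@_t *+ (t == s).
  by rewrite mcoeffZ mcoeffU mulr_natr.
rewrite raddf_sum /=; have [s_w|s_w] := msuppP.
  rewrite (big_fsetD1 s) //= coeffU eqxx big1_fset ?addr0 // => t.
  by rewrite in_fsetD1 coeffU => /andP[/negbTE -> _].
rewrite rmorph0 big1_fset // => t t_w _; rewrite coeffU.
by case: eqP t_w => // ->; rewrite (negbTE s_w).
Qed.

(* The [R]-linear map [R (x)_Q free_mod Q S -> V] induced by a [pi]-semilinear [g]. *)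
Definition free_induced (V : lmodType R) (g : free_mod Q S -> V) : free_mod R S -> V :=
  free_ext idfun (fun s => g (gen s)).

Lemma free_induced_lin (V : lmodType R) (g : free_mod Q S -> V) : lin (free_induced g).
Proof. exact: free_ext_slin. Qed.

Lemma free_inducedE (V : lmodType R) (g : free_mod Q S -> V) :
  slin pi g -> forall w, free_induced g (free_map w) = g w.
Proof.
move=> g_slin; apply: (@slin_free_eq Q R pi) => // [|s].
  by move=> a u v; rewrite free_map_slin free_induced_lin.
by rewrite free_map_gen /free_induced free_ext_gen.
Qed.

Lemma free_map_base_change : base_change pi free_map.
Proof.
split=> [|N f f_slin]; first exact: free_map_slin.
exists (free_induced f); split; [exact: free_induced_lin | exact: free_inducedE |].
move=> g g_lin eq_g; apply: (@slin_free_eq R R idfun) => // [|s].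
  exact: free_ext_slin.
by rewrite /free_induced free_ext_gen -eq_g free_map_gen.
Qed.

Lemma free_map_surj : (forall r, exists q, pi q = r) ->
  forall t : free_mod R S, exists w, free_map w = t.
Proof.
move=> pi_surj t; pose c r := projT1 (cid (pi_surj r)).
have pic r : pi (c r) = r by rewrite /c; case: cid.
exists (\sum_(s <- msupp t) c t@_s *: << s >>).
rewrite (slin_sum free_map_slin) [in RHS](freeE t); apply: eq_bigr => s _.
by rewrite (slinZ free_map_slin) pic free_map_gen.
Qed.

Lemma free_map_scale (x : Q) w : pi x = 0 -> free_map (x *: w) = 0.
Proof.
move=> pix; apply/malgP => s.
by rewrite mcoeff_free_map mcoeffZ mcoeff0 rmorphM pix mul0r.
Qed.

Variable x : Q.
Hypothesis x_reg : forall q, x * q = 0 -> q = 0.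
Hypothesis pi_ker : forall q, pi q = 0 <-> exists a, q = x * a.

Lemma free_scale_inj w w' : x *: w = x *: w' -> w = w'.
Proof.
move=> eq_w; apply/malgP => s; apply/subr0_eq/x_reg.
by rewrite mulrBr -!mcoeffZ eq_w subrr.
Qed.

Lemma free_map_eq0 w : free_map w = 0 -> exists w', w = x *: w'.
Proof.
move=> w0; have divw s : exists a, w@_s = x * a.
  by apply/pi_ker; rewrite -mcoeff_free_map w0 mcoeff0.
pose a s := projT1 (cid (divw s)).
exists (\sum_(s <- msupp w) a s *: << s >>).
rewrite {1}(freeE w) scaler_sumr; apply: eq_bigr => s _.
by rewrite scalerA /a; case: cid => /= b ->.
Qed.

End BaseChange.

 

Section Sigma.
Context {A : comNzRingType}.

Definition sigma (L0 L1 L2 : Type) : free_mod A (L1 + L0) -> free_mod A (L2 + L1) :=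
  free_ext idfun (fun s => if s is inl g then gen (inr g) else 0).
Arguments sigma {L0 L1 L2}.

Lemma sigma_slin {L0 L1 L2} : slin idfun (@sigma L0 L1 L2).
Proof. exact: free_ext_slin. Qed.

Lemma sigma_inl {L0 L1 L2} g : @sigma L0 L1 L2 (gen (inl g)) = gen (inr g).
Proof. exact: free_ext_gen. Qed.

Lemma sigma_inr {L0 L1 L2} g : @sigma L0 L1 L2 (gen (inr g)) = 0.
Proof. exact: free_ext_gen. Qed.

Lemma sigmaK {L0 L1 L2 L3} v : @sigma L1 L2 L3 (@sigma L0 L1 L2 v) = 0.
Proof.
move: v; apply: (@slin_free_eq _ _ idfun _ _ (sigma \o @sigma L0 L1 L2) (fun _ => 0)).
- by move=> a u w /=; rewrite !sigma_slin.
- exact: slin_zero.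
case=> g /=.
- by rewrite sigma_inl sigma_inr.
- by rewrite sigma_inr (slin0 sigma_slin).
Qed.

End Sigma.
Arguments sigma {A L0 L1 L2}.

Lemma free_map_sigma (Q R : comNzRingType) (pi : {rmorphism Q -> R}) (L0 L1 L2 : Type)
    (w : free_mod Q (L1 + L0)) :
  free_map pi (sigma w) = sigma (free_map pi w) :> free_mod R (L2 + L1).
Proof.
move: w; apply: (@slin_free_eq Q R pi) => [a u v|a u v|[]g].
- by rewrite sigma_slin free_map_slin.
- by rewrite free_map_slin sigma_slin.
- by rewrite sigma_inl !free_map_gen sigma_inl.
- by rewrite sigma_inr free_map_gen sigma_inr (slin0 (free_map_slin pi)).
Qed.

(** * Complexes from towers of modules *)

Lemma nat2_ind (P : nat -> Prop) :
  P 0%N -> P 1%N -> (forall m, P m -> P m.+2) -> forall m, P m.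
Proof.
move=> P0 P1 PS m; suff : P m /\ P m.+1 by case.
by elim: m => [|m [IHm IHm1]]; split => //; apply: PS.
Qed.

Lemma cdif0 (R : comNzRingType) (X : complex R) i j : cdif X i j 0 = 0.
Proof. exact: slin0 (lin_slin (cdif_lin X i j)). Qed.

Section Degree.
Variable c : int.

Definition deg (m : nat) : int := c + m%:Z.

(* Inverse of [deg] on [c + nat]; every degree below [c] is sent to [0]. *)
Definition ndeg (i : int) : nat := if (i - c)%R is Posz k then k else 0%N.

Lemma ndeg_deg m : ndeg (deg m) = m.
Proof. by rewrite /ndeg /deg addrAC subrr add0r. Qed.

Lemma degS m : deg m.+1 = deg m + 1.
Proof. by rewrite /deg -addrA -PoszD addn1. Qed.

Lemma deg_ge m : c <= deg m.
Proof. by rewrite /deg lerDl. Qed.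

Lemma ndegP i : i = deg (ndeg i) \/ (ndeg i = 0%N /\ i < c).
Proof.
rewrite /ndeg; case E: (i - c) => [k|k]; first by left; rewrite /deg -E addrC subrK.
by right; split => //; rewrite -subr_lt0 E.
Qed.

Lemma ndeg0_le i : ndeg i = 0%N -> i <= c.
Proof. by move=> i0; case: (ndegP i) => [->|[_ /ltW //]]; rewrite i0 /deg addr0. Qed.

Lemma ndegS i m : ndeg i = m.+1 -> i = deg m.+1.
Proof. by move=> im; case: (ndegP i) => [|[]]; rewrite im. Qed.

Lemma ndeg_pred i m : ndeg i = m.+1 -> ndeg (i - 1) = m /\ i - 1 = deg m.
Proof. by move=> /ndegS ->; rewrite degS addrK ndeg_deg. Qed.

Lemma ndeg_succ i m : i = deg m -> ndeg (i + 1) = m.+1 /\ i + 1 = deg m.+1.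
Proof. by move=> ->; rewrite -degS ndeg_deg. Qed.

Lemma ndeg_sub2 i : ndeg (i - 2) = (ndeg i).-2.
Proof.
case: (ndegP i) => [E|[E lt_ic]].
- rewrite [in RHS]E ndeg_deg; move: E; case: (ndeg i) => [|[|m]] ->.
  + by rewrite /ndeg /deg addr0 addrAC subrr.
  + by rewrite /ndeg /deg addrAC [c + _]addrC addrK.
  + by rewrite !degS -addrA addrK ndeg_deg.
- rewrite E /ndeg; suff : i - 2 - c < 0 by case: (i - 2 - c).
  by rewrite subr_lt0 (lt_trans _ lt_ic) // ltrBlDr ltrDl.
Qed.

End Degree.

Section Cast.
Variables (A : comNzRingType) (I : eqType) (M : I -> lmodType A).

(* Transport along [a = b], and [0] when [a != b]. *)
Definition fcast (a b : I) : M a -> M b :=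
  if a =P b is ReflectT e then fun v => eq_rect a M v b e else fun _ => 0.

Lemma fcast_id a (v : M a) : fcast a v = v.
Proof. by rewrite /fcast; case: eqP => // e; rewrite (eq_axiomK e). Qed.

Lemma fcast_neq a b (v : M a) : a <> b -> fcast b v = 0.
Proof. by rewrite /fcast; case: eqP. Qed.

Lemma fcast_lin a b : lin (@fcast a b).
Proof.
case: (eqVneq a b) => [<-|/eqP neq_ab] k u v; first by rewrite !fcast_id.
by rewrite !fcast_neq // scaler0 addr0.
Qed.

End Cast.
Arguments fcast {A I} M {a} b.

Unset Implicit Arguments.
Section Tower.
Variables (A : comNzRingType) (M : nat -> lmodType A) (dM : forall m, M m.+1 -> M m).
Hypothesis dM_lin : forall m : nat, lin (dM m).
Hypothesis dMK : forall m v, dM m (dM m.+1 v) = 0.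
Hypothesis M0 : forall v : M 0, v = 0.

Definition tower_dif (a b : nat) : M a -> M b :=
  if a is a'.+1 then fun v => fcast M b (dM a' v) else fun _ => 0.

Lemma tower_dif_lin a b : lin (tower_dif a b).
Proof.
case: a => [|a] k u v /=; first by rewrite scaler0 addr0.
by rewrite dM_lin fcast_lin.
Qed.

Lemma tower_dif0 a b : tower_dif a b 0 = 0.
Proof. exact: slin0 (lin_slin (tower_dif_lin a b)). Qed.

Lemma tower_difS b v : tower_dif b.+1 b v = dM b v.
Proof. exact: fcast_id. Qed.

Lemma tower_dif_neq a b v : a <> b.+1 -> tower_dif a b v = 0.
Proof. by case: a v => [|a] v //= neq_ab; rewrite fcast_neq // => eq_ab; subst b. Qed.

Lemma tower_vanish a (v : M a) : a = 0%N -> v = 0.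
Proof. by move=> a0; subst a; apply: M0. Qed.

Lemma tower_difK a b b' v : tower_dif b b' (tower_dif a b v) = 0.
Proof.
have [eq_ab|/eqP neq_ab] := eqVneq a b.+1; last first.
  by rewrite (tower_dif_neq _ _ _ neq_ab) tower_dif0.
subst a; rewrite tower_difS; case: b v => [//|b] v.
have [<-|/eqP neq_bb'] := eqVneq b b'; first by rewrite tower_difS dMK.
by rewrite tower_dif_neq // => -[].
Qed.

Variable c : int.

Lemma tower_dif_deg i j v : j != i - 1 -> tower_dif (ndeg c i) (ndeg c j) v = 0.
Proof.
move=> neq_ji; have [E|/eqP neq] := eqVneq (ndeg c i) (ndeg c j).+1; last first.
  by rewrite tower_dif_neq.
case Ej: (ndeg c j) => [|m]; first exact: tower_vanish.
have [_ Ei] := ndeg_pred (etrans E (congr1 S Ej)).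
by move: neq_ji; rewrite Ei -(ndegS Ej) eqxx.
Qed.

(* The complex with [M m] in degree [deg c m] and zero below [c]. *)
Definition tower_complex : complex A :=
  Complex (fun i => M (ndeg c i)) (fun i j => tower_dif (ndeg c i) (ndeg c j))
    (fun i j => tower_dif_lin _ _) tower_dif_deg
    (fun i j k v => tower_difK _ _ _ v).

Lemma tower_bounded_below : bounded_below tower_complex.
Proof.
exists c => i lt_ic v; apply: tower_vanish.
by case: (ndegP c i) => [Ei|[]//]; move: lt_ic; rewrite {1}Ei ltNge deg_ge.
Qed.

Section Augmentation.
Variables (R : comNzRingType) (phi : {rmorphism A -> R}) (X : complex R).
Variable aug : forall m, M m -> X (deg c m).
Hypothesis aug_slin : forall m, slin phi (aug m).
Hypothesis aug_dif :
  forall m v, aug m (dM m v) = cdif X (deg c m.+1) (deg c m) (aug m.+1 v).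

Definition tower_aug (i : int) (v : M (ndeg c i)) : X i := fcast X i (aug (ndeg c i) v).

Lemma tower_aug_slin i : slin phi (tower_aug i).
Proof. by move=> a u v; rewrite /tower_aug aug_slin fcast_lin. Qed.

(* [i] and [j] are generalized so that the casts can be removed by [subst]. *)
Lemma tower_aug_difE a b i j (v : M a) : a = b.+1 -> i = deg c a -> j = deg c b ->
  fcast X j (aug b (tower_dif a b v)) = cdif X i j (fcast X i (aug a v)).
Proof. by move=> ea ei ej; subst a i j; rewrite !fcast_id tower_difS aug_dif. Qed.

Lemma tower_aug_dif i j v :
  tower_aug j (cdif tower_complex i j v) = cdif X i j (tower_aug i v).
Proof.
have [->|neq_ji] := eqVneq j (i - 1); last first.
  by rewrite (cdif_deg tower_complex) // (cdif_deg X) // (slin0 (tower_aug_slin _)).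
case Ei: (ndeg c i) => [|m].
  by rewrite (tower_vanish _ v Ei) /= tower_dif0 !(slin0 (tower_aug_slin _)) cdif0.
have [Ei1 Edeg] := ndeg_pred Ei.
by apply: tower_aug_difE; rewrite ?Ei1 // Ei -(ndegS Ei).
Qed.

Hypothesis aug_cycle : forall m (y : X (deg c m.+1)),
  cdif X (deg c m.+1) (deg c m) y = 0 -> exists v, dM m v = 0 /\ aug m.+1 v = y.
Hypothesis aug_boundary : forall m (v : M m.+1) (z : X (deg c m.+2)),
  dM m v = 0 -> aug m.+1 v = cdif X (deg c m.+2) (deg c m.+1) z ->
  exists a, dM m.+1 a = v.
Hypothesis X_acyclic_below : forall j, j <= c -> homology_zero X j.

Lemma tower_aug_cycleE a b m j j' (y : X j) :
  a = m.+1 -> b = m -> j = deg c m.+1 -> j' = deg c m -> cdif X j j' y = 0 ->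
  exists (v : M a) (z : X (j + 1)),
    tower_dif a b v = 0 /\ y = fcast X j (aug a v) + cdif X (j + 1) j z.
Proof.
move=> ea eb ej ej' dy0; subst a b j j'.
have [v [dv0 <-]] := aug_cycle _ _ dy0.
by exists v, 0; rewrite tower_difS dv0 cdif0 addr0 fcast_id.
Qed.

Lemma tower_aug_boundaryE a b a' m j j' (v : M a) (z : X j') :
  a = m.+1 -> b = m -> a' = m.+2 -> j = deg c m.+1 -> j' = deg c m.+2 ->
  tower_dif a b v = 0 -> fcast X j (aug a v) = cdif X j' j z ->
  exists w : M a', v = tower_dif a' a w.
Proof.
move=> ea eb ea' ej ej' dv0 augv; subst a b a' j j'.
rewrite tower_difS in dv0; rewrite fcast_id in augv.
by have [w <-] := aug_boundary _ _ _ dv0 augv; exists w; rewrite tower_difS.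
Qed.

Lemma tower_quasi_iso : quasi_iso (C := tower_complex) tower_aug.
Proof.
move=> j; case Ej: (ndeg c j) => [|m]; split.
- move=> y dy0; have [z ->] := X_acyclic_below _ (ndeg0_le Ej) _ dy0.
  by exists 0, z; rewrite /= tower_dif0 (slin0 (tower_aug_slin _)) add0r.
- by move=> v _ _; exists 0; rewrite /= tower_dif0; apply: tower_vanish.
- have [Ej1 Edeg] := ndeg_pred Ej.
  by move=> y dy0; apply: (tower_aug_cycleE _ _ _ _ _ y Ej Ej1 (ndegS Ej) Edeg dy0).
- have [Ej1 Edeg] := ndeg_pred Ej; have Ej' := ndegS Ej.
  have [Ej2 Edeg'] := ndeg_succ Ej'.
  move=> v dv0 [z augv].
  exact: (tower_aug_boundaryE _ _ _ _ _ _ v z Ej Ej1 Ej2 Ej' Edeg' dv0 augv).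
Qed.

End Augmentation.
End Tower.
Arguments tower_dif {A M} dM a b.
Arguments tower_complex {A M} dM dM_lin dMK M0 c.
Arguments tower_bounded_below {A M} dM dM_lin dMK M0 c.
Arguments tower_aug {A M} c {R X} aug i.
Arguments tower_aug_slin {A M c R phi X aug} aug_slin i.
Arguments tower_aug_dif {A M dM dM_lin dMK M0 c R phi X aug} aug_slin aug_dif i j v.
Arguments tower_quasi_iso {A M dM dM_lin dMK M0 c R phi X aug}
  aug_slin aug_cycle aug_boundary X_acyclic_below.

Section TowerMap.
Variables (A B : comNzRingType) (phi : {rmorphism A -> B}).
Variables (M : nat -> lmodType A) (dM : forall m, M m.+1 -> M m).
Variables (M' : nat -> lmodType B) (dM' : forall m, M' m.+1 -> M' m).
Variable f : forall m, M m -> M' m.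
Hypothesis f_slin : forall m, slin phi (f m).
Hypothesis f_dif : forall m v, f m (dM m v) = dM' m (f m.+1 v).

Lemma tower_dif_map a b v :
  f b (tower_dif dM a b v) = tower_dif dM' a b (f a v).
Proof.
case: a v => [|a] v /=; first exact: slin0 (f_slin b).
have [<-|/eqP neq_ab] := eqVneq a b; first by rewrite !fcast_id f_dif.
by rewrite !fcast_neq // (slin0 (f_slin b)).
Qed.

End TowerMap.
Arguments tower_dif_map {A B phi M dM M' dM' f} f_slin f_dif a b v.

(** * The resolutions *)

Section Resolution.
Variables (Q R : comNzRingType) (pi : {rmorphism Q -> R}) (x : Q).
Variables (X : complex R) (c : int).

(* Stage [m] of the resolution [W]: [W m] is free on [gen0 + gen1], where
   [gen0] are the generators added in degree [m] and [gen1] those added in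
   degree [m - 1] (they enter [W m] through [sigma]); [gen2] are those of
   degree [m - 2], so that [sdif] lands in [W (m - 1)]. *)
Record stage (m : nat) := Stage {
  gen0 : Type; gen1 : Type; gen2 : Type;
  sdif : free_mod Q (gen0 + gen1) -> free_mod Q (gen1 + gen2);
  saug : free_mod Q (gen0 + gen1) -> X (deg c m) }.
Arguments gen0 {m} s. Arguments gen1 {m} s. Arguments gen2 {m} s.
Arguments sdif {m}. Arguments saug {m}.

(* Pairs [(w, y)] of a cycle [w] and a chain [y] with [aug w = d y]; each one
   becomes a generator [e] of degree [m + 1] with [d e = w] and [aug e = y]. *)
Definition cone_cycle m (s : stage m) :=
  {p : free_mod Q (gen0 s + gen1 s) * X (deg c m.+1) |
    sdif s p.1 = 0 /\ saug s p.1 = cdif X (deg c m.+1) (deg c m) p.2}.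
Arguments cone_cycle {m} s.

(* The image of a generator [h] of degree [m] under [sigma] is given the boundary
   [x h - sigma (d h)], which makes [d sigma + sigma d = x] (lemma [dW_sigma]). *)
Definition next_stage m (s : stage m) : stage m.+1 :=
  Stage m.+1 (cone_cycle s) (gen0 s) (gen1 s)
   (free_ext idfun (fun g => match g with
      | inl r => (sval r).1
      | inr h => x *: gen (inl h) - sigma (sdif s (gen (inl h))) end))
   (free_ext pi (fun g => if g is inl r then (sval r).2 else 0)).
Arguments next_stage {m} s.

Fixpoint stage_at m : stage m :=
  if m is m'.+1 then next_stage (stage_at m')
  else Stage 0 void void void (fun _ => 0) (fun _ => 0).

Local Notation W m := (free_mod Q (gen0 (stage_at m) + gen1 (stage_at m))).

Local Notation dW m := (sdif (stage_at m.+1)).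
Local Notation augW m := (saug (stage_at m)).

Lemma sdif_lin m : lin (sdif (stage_at m)).
Proof.
case: m => [|m] a u v; first by rewrite scaler0 addr0.
exact: (free_ext_slin idfun _ a u v).
Qed.

Lemma saug_slin m : slin pi (augW m).
Proof. by case: m => [|m]; [exact: slin_zero | exact: free_ext_slin]. Qed.

Lemma W0 (w : W 0) : w = 0.
Proof. by apply: free_mod_empty => -[]. Qed.

Lemma dW_inl m (r : cone_cycle (stage_at m)) : dW m (gen (inl r)) = (sval r).1.
Proof. exact: free_ext_gen. Qed.

Lemma dW_inr m (h : gen0 (stage_at m)) :
  dW m (gen (inr h)) = x *: gen (inl h) - sigma (sdif (stage_at m) (gen (inl h))).
Proof. exact: free_ext_gen. Qed.

Lemma augW_inl m (r : cone_cycle (stage_at m)) : augW m.+1 (gen (inl r)) = (sval r).2.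
Proof. exact: free_ext_gen. Qed.

Lemma augW_inr m (h : gen0 (stage_at m)) : augW m.+1 (gen (inr h)) = 0.
Proof. exact: free_ext_gen. Qed.

Lemma dW_sigma m (w : W m) : dW m (sigma w) = x *: w - sigma (sdif (stage_at m) w).
Proof.
move: w; apply: (@slin_free_eq Q Q idfun) => [a u v|a u v|[]h].
- by rewrite sigma_slin sdif_lin.
- rewrite sdif_lin sigma_slin scalerDr scalerA mulrC -scalerA.
  by rewrite opprD addrACA -scalerBr.
- by rewrite sigma_inl dW_inr.
rewrite sigma_inr (slin0 (lin_slin (sdif_lin m.+1))); case: m h => [[]|m] h.
rewrite dW_inr (slinB sigma_slin) (slinZ sigma_slin) sigma_inl sigmaK.
by rewrite subr0 subrr.
Qed.

Lemma saug_sigma m (L : Type) (v : free_mod Q (gen1 (stage_at m) + L)) :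
  saug (stage_at m) (sigma v) = 0.
Proof.
case: m L v => [//|m] L; apply: (@slin_free_eq Q R pi) => [a u v|a u v|[]g].
- by rewrite sigma_slin; apply: (saug_slin m.+1).
- by rewrite scaler0 addr0.
- by rewrite sigma_inl augW_inr.
- by rewrite sigma_inr; apply: (slin0 (saug_slin m.+1)).
Qed.

Lemma sdif_dW m (w : W m.+1) : sdif (stage_at m) (dW m w) = 0.
Proof.
elim: m w => [//|m IHm]; apply: (@slin_free_eq Q Q idfun) => [a u v|a u v|[r|h]].
- by rewrite sdif_lin sdif_lin.
- by rewrite scaler0 addr0.
- by rewrite dW_inl; case: (svalP r).
rewrite dW_inr (slinB (lin_slin (sdif_lin _))) (slinZ (lin_slin (sdif_lin _))).
by rewrite dW_sigma IHm (slin0 sigma_slin) subr0 subrr.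
Qed.

Hypothesis pix : pi x = 0.

Lemma augW_dif m (w : W m.+1) :
  saug (stage_at m) (dW m w) = cdif X (deg c m.+1) (deg c m) (augW m.+1 w).
Proof.
move: w; apply: (@slin_free_eq Q R pi) => [a u v|a u v|[r|h]].
- by rewrite sdif_lin (saug_slin m).
- by rewrite (saug_slin m.+1) cdif_lin.
- by rewrite dW_inl augW_inl; case: (svalP r).
rewrite dW_inr augW_inr cdif0 (slinB (saug_slin m)) (slinZ (saug_slin m)).
by rewrite pix scale0r saug_sigma subr0.
Qed.

Lemma W_cycle_lift m (y : X (deg c m.+1)) : cdif X (deg c m.+1) (deg c m) y = 0 ->
  exists w : W m.+1, dW m w = 0 /\ augW m.+1 w = y.
Proof.
move=> dy0; have r_cycle : sdif (stage_at m) 0 = 0 /\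
    saug (stage_at m) 0 = cdif X (deg c m.+1) (deg c m) y.
  by rewrite (slin0 (lin_slin (sdif_lin m))) (slin0 (saug_slin m)) dy0.
by exists (gen (inl (exist _ (0, y) r_cycle))); rewrite dW_inl augW_inl.
Qed.

Lemma W_boundary_lift m (w : W m) (z : X (deg c m.+1)) : sdif (stage_at m) w = 0 ->
  saug (stage_at m) w = cdif X (deg c m.+1) (deg c m) z -> exists a, dW m a = w.
Proof.
by move=> dw0 augw; exists (gen (inl (exist _ (w, z) (conj dw0 augw)))); rewrite dW_inl.
Qed.

Hypothesis pi_surj : forall r, exists q, pi q = r.

Local Notation T m := (free_mod R (gen0 (stage_at m) + gen1 (stage_at m))).

Definition dT m : T m.+1 -> T m := free_induced (fun w => free_map pi (dW m w)).
Definition augT m : T m -> X (deg c m) := free_induced (augW m).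

Lemma dT_lin m : lin (dT m).
Proof. exact: free_induced_lin. Qed.

Lemma augT_lin m : lin (augT m).
Proof. exact: free_induced_lin. Qed.

Lemma dT_map m w : dT m (free_map pi w) = free_map pi (dW m w).
Proof.
apply: free_inducedE => a u v.
by rewrite sdif_lin free_map_slin.
Qed.

Lemma augT_map m w : augT m (free_map pi w) = augW m w.
Proof. by apply: free_inducedE; apply: saug_slin. Qed.

Lemma T0 (t : T 0) : t = 0.
Proof. by apply: free_mod_empty => -[]. Qed.

Lemma dTK m t : dT m (dT m.+1 t) = 0.
Proof.
have [w <-] := free_map_surj pi_surj t.
by rewrite !dT_map sdif_dW (slin0 (free_map_slin pi)).
Qed.

Lemma dT_sigma m (t : T m.+1) : dT m.+1 (sigma t) + sigma (dT m t) = 0.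
Proof.
have [w <-] := free_map_surj pi_surj t.
rewrite -free_map_sigma dT_map dT_map -free_map_sigma -(slinD (free_map_slin pi)).
by rewrite dW_sigma subrK free_map_scale.
Qed.

Lemma augT_sigma m (t : T m) : augT m.+1 (sigma t) = 0.
Proof.
have [w <-] := free_map_surj pi_surj t.
by rewrite -free_map_sigma augT_map saug_sigma.
Qed.

Lemma augT_dif m t : augT m (dT m t) = cdif X (deg c m.+1) (deg c m) (augT m.+1 t).
Proof.
have [w <-] := free_map_surj pi_surj t.
by rewrite dT_map !augT_map augW_dif.
Qed.

(* [F m = T m (+) T (m - 2) (+) T (m - 4) (+) ...], with differential [dT + sigma]. *)
Fixpoint Ftail m : lmodType R := if m is m'.+2 then (T m' * Ftail m')%type else T 0.
Definition F m : lmodType R := (T m * Ftail m)%type.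

Definition sigma_head m : Ftail m.+1 -> T m :=
  if m is m'.+1 then fun g => sigma g.1 else fun _ => 0.

Fixpoint dFtail m : Ftail m.+1 -> Ftail m :=
  match m with
  | m'.+2 => fun g => (dT m' g.1 + sigma_head m' g.2, dFtail m' g.2)
  | _ => fun _ => 0 end.

Definition dF m : F m.+1 -> F m := dFtail m.+2.
Definition augF m (p : F m) : X (deg c m) := augT m p.1.

Lemma sigma_head_lin m : lin (sigma_head m).
Proof. by case: m => [|m] a u v /=; rewrite ?scaler0 ?addr0 // sigma_slin. Qed.

Lemma dFtail_lin m : lin (dFtail m).
Proof.
elim/nat2_ind: m => [||m IHm] a u v /=; rewrite ?scaler0 ?addr0 //.
apply/pair_equal_spec; split => //=.
by rewrite dT_lin sigma_head_lin scalerDr addrACA.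
Qed.

Lemma dF_lin m : lin (dF m).
Proof. exact: (dFtail_lin m.+2). Qed.

Lemma augF_lin m : lin (augF m).
Proof. by move=> a u v; rewrite /augF /= augT_lin. Qed.

Lemma F0 (p : F 0) : p = 0.
Proof. by case: p => t g; rewrite (T0 t) (T0 g). Qed.

Lemma sigma_sigma_head m g : sigma (sigma_head m g) = 0 :> T m.+1.
Proof. by case: m g => [|m] g /=; [rewrite (slin0 sigma_slin) | exact: sigmaK]. Qed.

Lemma dFK_head m (p : F m.+2) :
  dT m (dT m.+1 p.1 + sigma_head m.+1 p.2) + sigma_head m (dFtail m.+1 p.2) = 0.
Proof.
rewrite (slinD (lin_slin (dT_lin m))) dTK add0r.
case: m p => [|m] [t [t' g]] /=.
  by rewrite (T0 t') (slin0 sigma_slin) (slin0 (lin_slin (dT_lin 0))) addr0.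
by rewrite (slinD sigma_slin) addrA dT_sigma add0r sigma_sigma_head.
Qed.

Lemma dFK m (p : F m.+2) : dF m (dF m.+1 p) = 0.
Proof.
elim/nat2_ind: m p => [p|p|m IHm p]; first exact: F0.
- by apply/pair_equal_spec; split; [exact: dFK_head|].
- by apply/pair_equal_spec; split; [exact: dFK_head|exact: IHm].
Qed.

Lemma augF_dif m (p : F m.+1) :
  augF m (dF m p) = cdif X (deg c m.+1) (deg c m) (augF m.+1 p).
Proof.
rewrite /augF /= (slinD (lin_slin (augT_lin m))) augT_dif.
by case: m p => [|m] p /=; rewrite ?augT_sigma ?(slin0 (lin_slin (augT_lin 0))) addr0.
Qed.

Lemma F_cycle_lift m (y : X (deg c m.+1)) : cdif X (deg c m.+1) (deg c m) y = 0 ->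
  exists p : F m.+1, dF m p = 0 /\ augF m.+1 p = y.
Proof.
move=> dy0; have [w [dw0 augw]] := W_cycle_lift m y dy0.
exists (free_map pi w, 0); split; last by rewrite /augF augT_map.
apply/pair_equal_spec; split; last exact: (slin0 (lin_slin (dFtail_lin m))).
rewrite /= dT_map dw0 (slin0 (free_map_slin pi)).
by rewrite (slin0 (lin_slin (sigma_head_lin m))) addr0.
Qed.

Hypothesis x_reg : forall q, x * q = 0 -> q = 0.
Hypothesis pi_ker : forall q, pi q = 0 <-> exists a, q = x * a.

Lemma dW_lift_scale k (w0 : W k.+2) (w1 : W k) (u0 : W k.+1) :
  dW k.+1 w0 + sigma w1 = x *: u0 ->
  x *: dW k u0 = x *: w1 - sigma (sdif (stage_at k) w1).
Proof.
move=> /(congr1 (dW k)); rewrite (slinD (lin_slin (sdif_lin _))).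
by rewrite (slinZ (lin_slin (sdif_lin _))) sdif_dW add0r dW_sigma => <-.
Qed.

Lemma F_obstruction k (p : F k.+2) (w0 : W k.+2) (w1 : W k) :
  dF k.+1 p = 0 -> free_map pi w0 = p.1 -> free_map pi w1 = p.2.1 ->
  exists u0, dW k.+1 w0 + sigma w1 = x *: u0.
Proof.
move=> dp0 w0p w1p; apply: (free_map_eq0 pi_ker).
rewrite (slinD (free_map_slin pi)) -dT_map free_map_sigma w0p w1p.
by have /pair_equal_spec[] := dp0.
Qed.

(* Induction on [k] in steps of two: the obstruction for the tail [p.2] is
   again divided by [x]. *)
Lemma F_lift k (p : F k.+2) (w0 : W k.+2) (w1 : W k) (u0 : W k.+1) :
  dF k.+1 p = 0 -> free_map pi w0 = p.1 -> free_map pi w1 = p.2.1 ->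
  dW k.+1 w0 + sigma w1 = x *: u0 ->
  exists e : F k.+1,
    [/\ dF k e = p.2, e.1 = free_map pi u0 & sigma (dW k u0) = sigma w1 :> W k.+1].
Proof.
elim/nat2_ind: k p w0 w1 u0 => [|| k IHk] p w0 w1 u0 dp0 w0p w1p obstr.
- exists (free_map pi u0, 0); split; last by rewrite (W0 (dW 0 u0)) (W0 w1).
    by rewrite (F0 (dF 0 _)) (F0 p.2).
  by [].
- have dW_u0 : dW 1 u0 = w1.
    apply: (free_scale_inj x_reg); rewrite (dW_lift_scale _ _ _ _ obstr) (W0 (sdif _ w1)).
    by rewrite (slin0 sigma_slin) subr0.
  exists (free_map pi u0, 0); split; [|by []|by rewrite dW_u0].
  rewrite /dF /= [RHS]surjective_pairing -w1p (T0 p.2.2).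
  by rewrite dT_map dW_u0 (slin0 sigma_slin) addr0.
have [w2 w2p] := free_map_surj pi_surj p.2.2.1.
have dp20 : dF k.+1 p.2 = 0 by have /pair_equal_spec[] := dp0.
have [u1 obstr1] := F_obstruction _ p.2 w1 w2 dp20 w1p w2p.
have [e [de e1 sigma_e]] := IHk p.2 w1 w2 u1 dp20 w1p w2p obstr1.
have dW_u0 : dW k.+2 u0 = w1 - sigma u1.
  apply: (free_scale_inj x_reg); rewrite (dW_lift_scale _ _ _ _ obstr) scalerBr.
  have -> : sdif (stage_at k.+2) w1 = x *: u1 - sigma w2 by rewrite -obstr1 addrK.
  by rewrite (slinB sigma_slin) (slinZ sigma_slin) sigmaK subr0.
exists (free_map pi u0, e); split; [|by []|].
- rewrite /dF [RHS]surjective_pairing -de -w1p; apply/pair_equal_spec.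
  split; last by []. rewrite /= dT_map e1 -free_map_sigma.
  by rewrite -(slinD (free_map_slin pi)) dW_u0 subrK.
- by rewrite [dW k.+2 u0]dW_u0 (slinB sigma_slin) sigmaK subr0.
Qed.

Lemma F_boundary_lift m (p : F m.+1) (z : X (deg c m.+2)) : dF m p = 0 ->
  augF m.+1 p = cdif X (deg c m.+2) (deg c m.+1) z -> exists a, dF m.+1 a = p.
Proof.
have [w0 w0p] := free_map_surj pi_surj p.1.
case: m p z w0 w0p => [|k] p z w0 w0p dp0 augp.
  have [a da] : exists a, dW 1 a = w0.
    by apply: (W_boundary_lift 1 w0 z (W0 _)); rewrite -augT_map w0p.
  exists (free_map pi a, 0); rewrite /dF [RHS]surjective_pairing (T0 p.2).
  by apply/pair_equal_spec; rewrite /= dT_map da w0p (slin0 sigma_slin) addr0.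
have [w1 w1p] := free_map_surj pi_surj p.2.1.
have [u0 obstr] := F_obstruction _ p w0 w1 dp0 w0p w1p.
have [e [de e1 sigma_e]] := F_lift _ p w0 w1 u0 dp0 w0p w1p obstr.
pose w := w0 - sigma u0.
have dw0 : sdif (stage_at k.+2) w = 0.
  rewrite (slinB (lin_slin (sdif_lin _))) dW_sigma sigma_e.
  by rewrite opprB addrA -obstr subrr.
have augw : saug (stage_at k.+2) w = cdif X (deg c k.+3) (deg c k.+2) z.
  by rewrite (slinB (saug_slin _)) saug_sigma subr0 -augT_map w0p.
have [a da] := W_boundary_lift _ w z dw0 augw.
exists (free_map pi a, e); rewrite /dF [RHS]surjective_pairing -de.
apply/pair_equal_spec; split; last by [].
by rewrite /= dT_map da e1 -free_map_sigma -(slinD (free_map_slin pi)) subrK.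
Qed.

Definition Fincl m (t : T m) : F m := (t, 0).
Definition Fproj m : F m -> F m.-2 := if m is m'.+2 then fun p => p.2 else fun _ => 0.
Definition Fsec m : F m.-2 -> F m := if m is m'.+2 then fun p => (0, p) else fun _ => 0.

Lemma Fincl_lin m : lin (Fincl m).
Proof. by move=> a u v; apply/pair_equal_spec; rewrite /= scaler0 addr0. Qed.

Lemma Fproj_lin m : lin (Fproj m).
Proof. by case: m => [|[|m]] a u v //=; rewrite scaler0 addr0. Qed.

Lemma Fincl_dif m t : dF m (Fincl m.+1 t) = Fincl m (dT m t).
Proof.
rewrite /dF /Fincl /= (slin0 (lin_slin (sigma_head_lin m))).
by rewrite (slin0 (lin_slin (dFtail_lin m))) addr0.
Qed.

Lemma Fproj_dif a b p :
  Fproj b (tower_dif dF a b p) = tower_dif dF a.-2 b.-2 (Fproj a p).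
Proof.
case: a p => [|a] p; first by rewrite /= (slin0 (lin_slin (Fproj_lin b))).
have [<-|/eqP neq_ab] := eqVneq a b.
  rewrite /= fcast_id; case: a p => [|[|a]] p //=.
  by rewrite fcast_id.
rewrite /= fcast_neq // (slin0 (lin_slin (Fproj_lin b))).
case: a p neq_ab => [|a] p neq_ab /=; first by [].
have [eq_ab|/eqP neq] := eqVneq a b.-2.+1; last by rewrite tower_dif_neq.
by case: b neq_ab eq_ab => [|[|b]] neq_ab eq_ab; [exact: esym (F0 _)|exact: esym (F0 _)|
  case: neq_ab; rewrite eq_ab].
Qed.

Lemma F_split_exact m :
  [/\ injective (Fincl m), (forall p, Fproj m p = 0 <-> exists t, p = Fincl m t) &
      exists s, lin s /\ forall p, Fproj m (s p) = p].
Proof.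
split.
- by move=> t t' /(congr1 fst).
- case: m => [|[|m]] [t g]; split=> [/= g0|[t' [-> _]]] //;
    by exists t; congr pair => //; apply: T0.
- exists (Fsec m); split.
    case: m => [|[|m]] a u v //=; rewrite ?scaler0 ?addr0 //.
    by apply/pair_equal_spec; rewrite /= scaler0 addr0.
  by case: m => [|[|m]] p //=; apply: esym; apply: F0.
Qed.

Hypothesis X_acyclic_below : forall j, j <= c -> homology_zero X j.

Lemma Ftail_projective m : projective (Ftail m).
Proof.
elim/nat2_ind: m => [||m IHm]; try exact: free_projective.
exact (projective_prod free_projective IHm).
Qed.

Lemma F_projective m : projective (F m).
Proof. exact (projective_prod free_projective (Ftail_projective m)). Qed.

Lemma Fproj_dif_cast a b a' b' (p : F a) : a' = a.-2 -> b' = b.-2 ->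
  fcast F b' (Fproj b (tower_dif dF a b p)) =
  tower_dif dF a' b' (fcast F a' (Fproj a p)).
Proof. by move=> -> ->; rewrite !fcast_id Fproj_dif. Qed.

Lemma F_split_exact_cast m m' : m' = m.-2 ->
  [/\ injective (Fincl m),
      (forall p, fcast F m' (Fproj m p) = 0 <-> exists t, p = Fincl m t) &
      exists s, lin s /\ forall p, fcast F m' (Fproj m (s p)) = p].
Proof.
move=> ->; have [inj_incl ker_proj [s [s_lin sK]]] := F_split_exact m.
split=> // [p|]; first by rewrite fcast_id.
by exists s; split=> // p; rewrite fcast_id.
Qed.

Let WC :=
  tower_complex (fun m => dW m) (fun m => sdif_lin m.+1) (fun m => sdif_dW m.+1) W0 c.
Let TC := tower_complex dT dT_lin dTK T0 c.
Let FC := tower_complex dF dF_lin dFK F0 c.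

Lemma resolution_exists :
  exists (W : complex Q) (qW : forall i, W i -> X i)
         (F : complex R) (qF : forall i, F i -> X i)
         (T : complex R) (eta : forall i, W i -> T i)
         (alpha : forall i, T i -> F i) (beta : forall i, F i -> shift 2 F i),
    [/\ proj_complex W /\ schain_map pi qW /\ quasi_iso qW,
        proj_complex F /\ chain_map qF /\ quasi_iso qF,
        (forall i, base_change pi (eta i)) /\
        (forall i j w, eta j (cdif W i j w) = cdif T i j (eta i w)),
        chain_map alpha /\ chain_map beta
      & degreewise_split_exact alpha beta].
Proof.
pose beta i (p : FC i) : shift 2 FC i := fcast F (ndeg c (i - 2)) (Fproj (ndeg c i) p).
exists WC, (tower_aug c (fun m => augW m)), FC, (tower_aug c augF), TC,
  (fun i => free_map pi), (fun i => Fincl (ndeg c i)), beta.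
split.
- split; first by split; [exact: tower_bounded_below | move=> i; exact: free_projective].
  split; last exact: tower_quasi_iso saug_slin W_cycle_lift
    (fun m => W_boundary_lift m.+1) X_acyclic_below.
  by split; [exact: tower_aug_slin saug_slin | exact: tower_aug_dif saug_slin augW_dif].
- have augF_slin m : slin idfun (augF m) by apply: lin_slin; apply: augF_lin.
  split; first by split; [exact: tower_bounded_below | move=> i; exact: F_projective].
  split; last exact: tower_quasi_iso augF_slin F_cycle_lift F_boundary_lift
    X_acyclic_below.
  split; first exact (tower_aug_slin augF_slin).
  exact: tower_aug_dif augF_slin augF_dif.
- split=> [i|i j w]; first exact: free_map_base_change.
  exact: (tower_dif_map (f := fun m => free_map pi) (fun m => free_map_slin pi)
    (fun m w => esym (dT_map m w))).
- split; first split=> [i|i j t]; first exact: Fincl_lin.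
    exact: (tower_dif_map (f := Fincl) (fun m => lin_slin (Fincl_lin m))
      (fun m t => esym (Fincl_dif m t))).
  split=> [i a u v|i j p]; first by rewrite /beta Fproj_lin fcast_lin.
  rewrite /= /beta expr2 mulrNN mulr1 scale1r.
  by apply: Fproj_dif_cast; apply: ndeg_sub2.
- by move=> i; apply: F_split_exact_cast; apply: ndeg_sub2.
Qed.

End Resolution.

Theorem mainTheorem3 (Q R : comNzRingType) (x : Q) (pi : {rmorphism Q -> R})
  (X : complex R) :
  noetherian Q -> local_ring Q -> regular_element x -> is_quotient_by x pi ->
  (exists N : int, forall i : int, N < `|i| -> homology_zero X i) ->
  exists (W : complex Q) (qW : forall i, W i -> X i)
         (F : complex R) (qF : forall i, F i -> X i)
         (T : complex R) (eta : forall i, W i -> T i)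
         (alpha : forall i, T i -> F i) (beta : forall i, F i -> shift 2 F i),
    [/\ proj_complex W /\ schain_map pi qW /\ quasi_iso qW,
        proj_complex F /\ chain_map qF /\ quasi_iso qF,
        (* T = R (x)_Q W with the induced differential *)
        (forall i, base_change pi (eta i)) /\
        (forall i j w, eta j (cdif W i j w) = cdif T i j (eta i w)),
        chain_map alpha /\ chain_map beta
      & degreewise_split_exact alpha beta].
Proof.
move=> _ _ [x_reg _] [pi_surj pi_ker] [N X_acyclic].
have pix : pi x = 0 by apply/pi_ker; exists 1; rewrite mulr1.
apply: (resolution_exists Q R pi x X (- (`|N| + 1)) pix pi_surj x_reg pi_ker).
by move=> j le_jc; apply: X_acyclic; lia.
Qed.
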